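(* Let $\Gamma=\langle V,(w_u)_{u\in V},\alpha,\beta\rangle$ be a star celebrity game with $\beta>1$ and $n=|V|$, and let $G$ be a Nash equilibrium graph of $\Gamma$. If there is $v\in V$ with $\max_{x\in V}d_G(v,x)\le\beta-1$, then $$W(G,\beta)=\sum_{u\in V}\ \sum_{x:\,d_G(u,x)>\beta}w_x\ \le\ \alpha(n-1).$$
   Context: A celebrity game $\Gamma=\langle V,(w_u)_{u\in V},\alpha,\beta\rangle$ consists of a set of players $V=\{1,\dots,n\}$, celebrity weights $w_u>0$, a link cost $\alpha>0$ and a critical distance $\beta$ with $1\le\beta\le n-1$. A strategy of player $u$ is a set $S_u\subseteq V\setminus\{u\}$; a strategy profile is $S=(S_1,\dots,S_n)$; its outcome graph $G[S]$ is the undirected graph on $V$ with edge set $\{\{u,v\}: u\in S_v\text{ or }v\in S_u\}$. With $d_G$ the graph distance (infinite between different connected components), the cost of player $u$ is $c_u(S)=\alpha|S_u|+\sum_{v:\,d_{G[S]}(u,v)>\beta}w_v$. $S$ is a Nash equilibrium if no player can strictly decrease its cost by changing only its own strategy; a graph $G$ is a Nash equilibrium graph if $G=G[S]$ for some Nash equilibrium $S$. $\Gamma$ is a star celebrity game if it has a Nash equilibrium graph that is connected. *)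

From mathcomp Require Import all_boot all_order all_algebra.
Set Implicit Arguments. Unset Strict Implicit. Unset Printing Implicit Defensive.
Import Order.TTheory GRing.Theory Num.Theory.

(* A strategy profile: S u is the set of players u buys links to. *)
Definition profile (n : nat) := 'I_n -> {set 'I_n}.

Definition valid_profile n (S : profile n) : Prop := forall u, u \notin S u.

Definition outcome n (S : profile n) : rel 'I_n :=
  fun u v => (u \in S v) || (v \in S u).

Fixpoint ball n (G : rel 'I_n) (k : nat) (u : 'I_n) : {set 'I_n} :=
  match k with
  | 0 => [set u]
  | k'.+1 => ball G k' u :|: [set y | [exists x in ball G k' u, G x y]]
  end.

(* d_G(u,v) > beta  (including d = infinity) *)
Definition far n (G : rel 'I_n) (beta : nat) (u v : 'I_n) : bool :=
  v \notin ball G beta u.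

Section Game.
Variable R : realFieldType.
Local Open Scope ring_scope.

Definition cost n (w : 'I_n -> R) (alpha : R) (beta : nat) (S : profile n)
  (u : 'I_n) : R :=
  alpha * (#|S u|)%:R + \sum_(v | far (outcome S) beta u v) w v.

Definition deviate n (S : profile n) (u : 'I_n) (T : {set 'I_n}) : profile n :=
  fun x => if x == u then T else S x.

Definition nash n (w : 'I_n -> R) (alpha : R) (beta : nat) (S : profile n) : Prop :=
  valid_profile S /\
  forall (u : 'I_n) (T : {set 'I_n}), u \notin T ->
    cost w alpha beta S u <= cost w alpha beta (deviate S u T) u.

Definition nash_graph n (w : 'I_n -> R) (alpha : R) (beta : nat) (G : rel 'I_n) : Prop :=
  exists S : profile n, nash w alpha beta S /\ forall u v, G u v = outcome S u v.

Definition connected n (G : rel 'I_n) : Prop :=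
  forall u v : 'I_n, exists k, v \in ball G k u.

Definition star_game n (w : 'I_n -> R) (alpha : R) (beta : nat) : Prop :=
  exists G, nash_graph w alpha beta G /\ connected G.

Definition Wcost n (w : 'I_n -> R) (G : rel 'I_n) (beta : nat) : R :=
  \sum_(u : 'I_n) \sum_(x | far G beta u x) w x.

End Game.

(* Some player v is within distance beta - 1 of everybody.  Any other player u
   may add a single link to v, after which everybody is within distance beta
   of u; so at equilibrium the distance part of u's cost is at most alpha.
   The distance part of v's own cost is 0, and summing over the n - 1 players
   u <> v bounds W(G, beta) by alpha (n - 1). *)
From mathcomp Require Import all_boot all_order all_algebra.
Set Implicit Arguments. Unset Strict Implicit. Unset Printing Implicit Defensive.
Import Order.TTheory GRing.Theory Num.Theory.
Local Open Scope ring_scope.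

Section Balls.
Variable n : nat.
Implicit Types (G : rel 'I_n) (u v x : 'I_n).

Lemma subrel_ball G (G' : rel 'I_n) k u :
  subrel G G' -> ball G k u \subset ball G' k u.
Proof.
move=> sGG'; elim: k => [|k IHk] //=.
apply/subsetP=> x; rewrite !inE => /orP[xB | /existsP[y /andP[yB Gyx]]].
  by rewrite (subsetP IHk x xB).
by apply/orP; right; apply/existsP; exists y; rewrite (subsetP IHk y yB) sGG'.
Qed.

Lemma eq_ball G (G' : rel 'I_n) k u : G =2 G' -> ball G k u = ball G' k u.
Proof.
by move=> eGG'; apply/eqP; rewrite eqEsubset !subrel_ball // => x y; rewrite eGG'.
Qed.

Lemma ball_subSn G k u : ball G k u \subset ball G k.+1 u.
Proof. exact: subsetUl. Qed.

Lemma ball_sub_leq G k l u : (k <= l)%N -> ball G k u \subset ball G l u.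
Proof.
move=> /subnK <-; elim: (l - k)%N => [|m IHm] //.
exact: subset_trans IHm (ball_subSn _ _ _).
Qed.

Lemma ball_adj G k u v x : G u v -> x \in ball G k v -> x \in ball G k.+1 u.
Proof.
move=> Guv; elim: k x => [|k IHk] x /=.
  by rewrite !inE => /eqP ->; apply/orP; right; apply/existsP; exists u; rewrite inE eqxx.
rewrite in_setU inE => /orP[xB | /existsP[y /andP[yB Gyx]]].
  by rewrite in_setU IHk.
by rewrite in_setU inE; apply/orP; right; apply/existsP; exists y; rewrite IHk.
Qed.

End Balls.

Lemma outcome_deviate_subrel n (S : profile n) (u : 'I_n) (T : {set 'I_n}) :
  S u \subset T -> subrel (outcome S) (outcome (deviate S u T)).
Proof.
move=> sST; have sub_dev x : S x \subset deviate S u T x.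
  by rewrite /deviate; case: eqP => [-> // | _]; exact: subxx.
move=> a b /orP[ab | ba]; apply/orP; [left | right]; exact: subsetP (sub_dev _) _ _.
Qed.

Section Deviation.
Variables (R : realFieldType) (n : nat) (w : 'I_n -> R) (alpha : R) (beta : nat).
Implicit Types (S : profile n) (G : rel 'I_n) (u c x : 'I_n).

Definition dist_cost G u : R := \sum_(x | far G beta u x) w x.

Lemma cost_dist_cost S u :
  cost w alpha beta S u = alpha * #|S u|%:R + dist_cost (outcome S) u.
Proof. by []. Qed.

Lemma Wcost_dist_cost G : Wcost w G beta = \sum_u dist_cost G u.
Proof. by []. Qed.

Lemma eq_dist_cost G (G' : rel 'I_n) u : G =2 G' -> dist_cost G u = dist_cost G' u.
Proof. by move=> eGG'; apply: eq_bigl => x; rewrite /far (eq_ball _ _ eGG'). Qed.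

Lemma dist_cost_center G k c :
  (forall x, x \in ball G k c) -> (k <= beta)%N -> dist_cost G c = 0.
Proof.
move=> cB le_k_beta; apply: big_pred0 => x.
by rewrite /far (subsetP (ball_sub_leq _ _ le_k_beta) x (cB x)).
Qed.

Lemma dist_cost_deviate_center S k u c :
  (forall x, x \in ball (outcome S) k c) -> (k < beta)%N ->
  dist_cost (outcome (deviate S u (c |: S u))) u = 0.
Proof.
move=> cB lt_k_beta; apply: big_pred0 => x; apply/negbF.
apply: (subsetP (ball_sub_leq _ _ lt_k_beta)); apply: (ball_adj (v := c)).
  by rewrite /outcome /deviate eqxx setU11 orbT.
exact: subsetP (subrel_ball k c (outcome_deviate_subrel (subsetUr _ _))) _ (cB x).
Qed.

Lemma nash_dist_cost_le S k u c :
  nash w alpha beta S -> 0 <= alpha -> u != c ->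
  (forall x, x \in ball (outcome S) k c) -> (k < beta)%N ->
  dist_cost (outcome S) u <= alpha.
Proof.
move=> [validS nashS] alpha_ge0 uc cB lt_k_beta.
have uT : u \notin c |: S u by rewrite !inE negb_or uc validS.
have := nashS u _ uT; rewrite !cost_dist_cost (dist_cost_deviate_center _ cB) // addr0.
rewrite /deviate eqxx => le_cost.
have card_T : (#|c |: S u| <= (#|S u|).+1)%N by rewrite cardsU1; case: (c \in S u).
rewrite -(lerD2l (alpha * #|S u|%:R)); apply: (le_trans le_cost).
by rewrite -[X in _ + X]mulr1 -mulrDr natr1 ler_wpM2l // ler_nat.
Qed.

End Deviation.

Theorem lemma3 (R : realFieldType) (n : nat) (w : 'I_n -> R) (alpha : R)
  (beta : nat)
  (hw : forall u, 0 < w u) (halpha : 0 < alpha)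
  (hbeta1 : (1 <= beta)%N) (hbetan : (beta <= n - 1)%N)
  (hstar : star_game w alpha beta)
  (hbeta : (1 < beta)%N)
  (G : rel 'I_n) (hG : nash_graph w alpha beta G)
  (v : 'I_n) (hv : forall x : 'I_n, x \in ball G (beta - 1) v) :
  Wcost w G beta <= alpha * (n - 1)%:R.
Proof.
case: hG => S [nashS GS].
have lt_beta : (beta - 1 < beta)%N by rewrite ltn_subrL.
have vB x : x \in ball (outcome S) (beta - 1) v by rewrite -(eq_ball _ _ GS).
have other_le u : u != v -> dist_cost w beta G u <= alpha.
  by move=> uv; rewrite (eq_dist_cost _ _ _ GS) (nash_dist_cost_le nashS _ uv vB) ?ltW.
rewrite Wcost_dist_cost (bigD1 v) //= (dist_cost_center w hv) ?leq_subr // add0r.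
apply: le_trans (ler_sum _ other_le) _.
by rewrite sumr_const cardC1 card_ord mulr_natr subn1.
Qed.
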